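(* Let $r\ge2$ and $h_s:=e_s-f_s\in\mathbb{K}[\mathcal{S}_{r+1}]$. Then for every Young tableau $t$ (standard or not) of frame $(r,1)\vdash r+1$, one has $h_s\cdot e_t\neq h_s$. In particular no such $e_t$ generates the minimal left ideal $\mathbb{K}[\mathcal{S}_{r+1}]\cdot h_s$.
   Context: $\mathbb{K}\in\{\mathbb{R},\mathbb{C}\}$; group ring product $(p\cdot q)(i)=p(q(i))$. $\tilde{\mathcal S}_r=\{p\in\mathcal{S}_{r+1}:p(r+1)=r+1\}$, $e_s=\frac1{r!}\sum_{p\in\tilde{\mathcal S}_r}p$, $f_s=\frac1{(r+1)!}\sum_{p\in\mathcal{S}_{r+1}}p$. For a Young tableau $t$ (a filling of a Young frame with $1,\ldots,r+1$, each once), $\mathcal{H}_t$, $\mathcal{V}_t$ are the row- and column-preserving permutation groups, $y_t=\sum_{p\in\mathcal{H}_t}\sum_{q\in\mathcal{V}_t}\mathrm{sign}(q)\,p\cdot q$, and $e_t=\mu_ty_t$ with the nonzero constant $\mu_t$ making $e_t$ idempotent. The frame $(r,1)$ has a first row of $r$ boxes and a second row of one box. *)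

From mathcomp Require Import all_boot all_order all_algebra all_fingroup.
Set Implicit Arguments. Unset Strict Implicit. Unset Printing Implicit Defensive.
Import GRing.Theory Num.Theory.
Local Open Scope ring_scope.

(* Group algebra K[S_n] as finitely supported functions 'S_n -> K.
   Points are 0-indexed: 'I_n stands for {1,...,n}. *)
Notation galg K n := {ffun 'S_n -> K}.

(* Paper's product: (p . q)(i) = p(q(i)), i.e. composition "q first, then p".
   In MathComp (q * p)%g x = p (q x), so p . q = (q * p)%g. *)
Definition gcomp (n : nat) (p q : 'S_n) : 'S_n := (q * p)%g.

Definition gmul (K : numFieldType) (n : nat) (a b : galg K n) : galg K n :=
  [ffun g => \sum_(p : 'S_n) \sum_(q : 'S_n | gcomp p q == g) a p * b q].

Definition e_s (K : numFieldType) (r : nat) : galg K r.+1 :=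
  [ffun g : 'S_r.+1 => (r`!%:R)^-1 * (g ord_max == ord_max)%:R].

Definition f_s (K : numFieldType) (r : nat) : galg K r.+1 :=
  [ffun g => (r.+1`!%:R)^-1].

Definition h_s (K : numFieldType) (r : nat) : galg K r.+1 :=
  [ffun g => e_s K r g - f_s K r g].

(* Young frame (r,1): boxes are indexed by k : 'I_(r+1);
   box k < r is in row 0, column k; box r is in row 1, column 0.
   A Young tableau of frame (r,1) (standard or not) is a bijective filling of
   the boxes with the entries 1..r+1, i.e. a permutation t : box -> entry. *)
Definition row_of (r : nat) (k : 'I_r.+1) : nat := if (k < r)%N then 0%N else 1%N.
Definition col_of (r : nat) (k : 'I_r.+1) : nat := if (k < r)%N then val k else 0%N.

(* row-preserving permutations of the entries *)
Definition Hgrp (r : nat) (t : 'S_r.+1) : {set 'S_r.+1} :=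
  [set p : 'S_r.+1 | [forall k, row_of ((t^-1)%g (p (t k))) == row_of k]].
(* column-preserving permutations of the entries *)
Definition Vgrp (r : nat) (t : 'S_r.+1) : {set 'S_r.+1} :=
  [set q : 'S_r.+1 | [forall k, col_of ((t^-1)%g (q (t k))) == col_of k]].

Definition psign (K : numFieldType) (n : nat) (q : 'S_n) : K := (-1) ^+ odd_perm q.

Definition y_t (K : numFieldType) (r : nat) (t : 'S_r.+1) : galg K r.+1 :=
  [ffun g => \sum_(p in Hgrp t) \sum_(q in Vgrp t | gcomp p q == g) psign K q].

Definition gscale (K : numFieldType) (n : nat) (c : K) (a : galg K n) : galg K n :=
  [ffun g => c * a g].

(* The two entries of the first column of [t] are swapped by a transposition
   [tau] of the column group, so [y_t . tau = - y_t]; hence [x . tau = - x] for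
   every [x] in the left ideal [K[S_(r+1)] . y_t], in particular for [h_s . e_t].
   But [h_s] takes the same nonzero value [-1/(r+1)!] at [g] and [g . tau]
   whenever neither moves the last point, and for [r >= 2] such a [g] exists.
   So [h_s] is not in that ideal, although it lies in its own left ideal. *)

From mathcomp Require Import all_boot all_order all_algebra all_fingroup.
Import GRing.Theory Num.Theory.
Local Open Scope ring_scope.

Section LeftAntisymmetry.
Variables (K : numFieldType) (n : nat) (tau : 'S_n).

Definition left_anti (f : galg K n) := forall g, f (tau * g)%g = - f g.

Lemma gscale_left_anti c f : left_anti f -> left_anti (gscale c f).
Proof. by move=> fA g; rewrite !ffunE fA mulrN. Qed.

Lemma gmul_left_anti a f : left_anti f -> left_anti (gmul a f).
Proof.
move=> fA g; rewrite !ffunE -sumrN; apply: eq_bigr => p _.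
rewrite (reindex_inj (mulgI tau)) /= -sumrN.
apply: eq_big => [q|q _]; last by rewrite fA mulrN.
by rewrite /gcomp -mulgA (inj_eq (mulgI _)).
Qed.

End LeftAntisymmetry.
Arguments left_anti {K n} tau f.

Lemma gmul1l (K : numFieldType) n (f : galg K n) :
  gmul [ffun p => ((p == 1%g)%:R : K)] f = f.
Proof.
apply/ffunP => g; rewrite ffunE (bigD1 1%g) //= [X in _ + X]big1 => [|p p_neq1].
  rewrite addr0 (big_pred1 g) ?ffunE ?eqxx ?mul1r // => q.
  by rewrite /gcomp mulg1.
by apply: big1 => q _; rewrite ffunE (negbTE p_neq1) mul0r.
Qed.

Section ColumnTransposition.
Variables (K : numFieldType) (r : nat) (t : 'S_r.+1).
Hypothesis r_gt0 : (0 < r)%N.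

(* Boxes [ord0] and [ord_max] form the first column of the frame (r,1). *)
Definition col_tperm : 'S_r.+1 := tperm (t ord0) (t ord_max).

Lemma col_of_ord0 : col_of (ord0 : 'I_r.+1) = 0%N.
Proof. by rewrite /col_of /=; case: ifP. Qed.

Lemma col_of_ord_max : col_of (ord_max : 'I_r.+1) = 0%N.
Proof. by rewrite /col_of /= ltnn. Qed.

Lemma col_tperm_mulg_Vgrp q : q \in Vgrp t -> (col_tperm * q)%g \in Vgrp t.
Proof.
rewrite !inE => /forallP qV; apply/forallP => k; rewrite permM /col_tperm.
case: tpermP => [/perm_inj ->|/perm_inj ->|_ _]; last exact: qV.
- by have := qV ord_max; rewrite col_of_ord_max col_of_ord0.
- by have := qV ord0; rewrite col_of_ord_max col_of_ord0.
Qed.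

Lemma mem_col_tperm_mulg_Vgrp q : ((col_tperm * q)%g \in Vgrp t) = (q \in Vgrp t).
Proof.
apply/idP/idP => [|/col_tperm_mulg_Vgrp //].
by move/col_tperm_mulg_Vgrp; rewrite mulgA tperm2 mul1g.
Qed.

Lemma odd_col_tperm_mulg q : odd_perm (col_tperm * q)%g = ~~ odd_perm q.
Proof.
have ord0_neq_max : (ord0 : 'I_r.+1) != ord_max.
  by rewrite -(inj_eq val_inj) /= eq_sym -lt0n r_gt0.
by rewrite odd_mul_tperm (inj_eq perm_inj) ord0_neq_max.
Qed.

Lemma y_t_left_anti : left_anti col_tperm (y_t K t).
Proof.
move=> g; rewrite !ffunE -sumrN; apply: eq_bigr => p _.
rewrite (reindex_inj (mulgI col_tperm)) /= -sumrN.
apply: eq_big => [q|q _].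
  by rewrite mem_col_tperm_mulg_Vgrp /gcomp -mulgA (inj_eq (mulgI _)).
by rewrite /psign odd_col_tperm_mulg -signrN.
Qed.

End ColumnTransposition.
Arguments col_tperm {r} t.

Lemma h_s_moving_last (K : numFieldType) r (g : 'S_r.+1) :
  g ord_max != ord_max -> h_s K r g = - (r.+1`!%:R)^-1.
Proof. by move=> g_last; rewrite !ffunE (negbTE g_last) mulr0 sub0r. Qed.

Lemma exists_ord_neq2 {n} (x y : 'I_n) :
  (2 < n)%N -> exists c : 'I_n, (c != x) && (c != y).
Proof.
move=> n_gt2; have /subsetPn[c _] : ~~ ([set: 'I_n] \subset [set x; y]).
  apply/negP => /subset_leq_card; rewrite cardsT card_ord cards2 leqNgt.
  by rewrite (leq_ltn_trans _ n_gt2) // ltnS leq_b1.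
by rewrite !inE negb_or => c_new; exists c.
Qed.

Lemma exists_perm_moving_last {r} (tau : 'S_r.+1) : (2 <= r)%N ->
  exists g : 'S_r.+1, g ord_max != ord_max /\ (tau * g)%g ord_max != ord_max.
Proof.
move=> r_ge2.
have [c /andP[c_neq_max c_neq_d]] := exists_ord_neq2 ord_max (tau ord_max) r_ge2.
exists (tperm c ord_max); rewrite tpermR c_neq_max permM.
by case: tpermP => [d_c|_|_ /eqP //]; [rewrite d_c eqxx in c_neq_d|].
Qed.

Lemma h_s_not_left_anti (K : numFieldType) {r} (tau : 'S_r.+1) :
  (2 <= r)%N -> ~ left_anti tau (h_s K r).
Proof.
move=> r_ge2 hA; have [g [g_last tg_last]] := exists_perm_moving_last tau r_ge2.
have := hA g; rewrite !h_s_moving_last // => /eqP; rewrite -subr_eq0 opprK.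
rewrite -mulr2n mulrn_eq0 oppr_eq0 invr_eq0 pnatr_eq0 /=.
by rewrite (negbTE (lt0n_neq0 (fact_gt0 _))).
Qed.

Theorem theorem5 (K : numFieldType) (r : nat) (hr : (2 <= r)%N)
    (t : 'S_r.+1) (mu : K) (hmu : mu != 0)
    (hidem : gmul (gscale mu (y_t K t)) (gscale mu (y_t K t)) = gscale mu (y_t K t)) :
  gmul (h_s K r) (gscale mu (y_t K t)) <> h_s K r /\
  ~ (forall x : galg K r.+1,
        (exists a, x = gmul a (gscale mu (y_t K t))) <-> (exists b, x = gmul b (h_s K r))).
Proof.
have h_s_notin_ideal a : gmul a (gscale mu (y_t K t)) <> h_s K r.
  move=> a_eq; apply: (h_s_not_left_anti K (col_tperm t) hr); rewrite -a_eq.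
  exact/gmul_left_anti/gscale_left_anti/y_t_left_anti/ltnW.
split; first exact: h_s_notin_ideal.
move=> same_ideal.
have [|a a_eq] := proj2 (same_ideal (h_s K r)).
  by exists [ffun p => (p == 1%g)%:R]; rewrite gmul1l.
exact: h_s_notin_ideal (esym a_eq).
Qed.
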